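(* Let $K\in\mathcal S_2$ be nonempty and bounded, and let $u\in S^1$. Then the Steiner symmetral $S_u(K)$ also belongs to $\mathcal S_2$.
   Context: For $x\in\mathbb R^n$, $B(x,1)$ is the closed Euclidean unit ball centered at $x$. The class $\mathcal S_n$ of ball-bodies consists of all intersections of families of closed Euclidean unit balls in $\mathbb R^n$ (equivalently, sets of the form $A^c=\bigcap_{x\in A}B(x,1)$, $A\subseteq\mathbb R^n$). For a compact convex set $K$ and $u\in S^{n-1}$, for each $x$ in the orthogonal projection $P_{u^\perp}(K)$ write $K\cap(x+\mathbb Ru)=[x+a(x)u,x+b(x)u]$; the Steiner symmetral is $S_u(K)=\{x+yu: x\in P_{u^\perp}(K),\ |y|\le |b(x)-a(x)|/2\}$. *)

From Stdlib Require Import Reals.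
Open Scope R_scope.

Definition pt := (R * R)%type.

Definition padd (p q : pt) : pt := (fst p + fst q, snd p + snd q).
Definition pscale (t : R) (p : pt) : pt := (t * fst p, t * snd p).
Definition dot (p q : pt) : R := fst p * fst q + snd p * snd q.
Definition norm (p : pt) : R := sqrt (dot p p).
Definition dist (p q : pt) : R := norm (padd p (pscale (-1) q)).

Definition unit_ball (x : pt) : pt -> Prop := fun y => dist x y <= 1.

Definition ball_hull (A : pt -> Prop) : pt -> Prop :=
  fun y => forall x, A x -> unit_ball x y.

Definition in_S2 (K : pt -> Prop) : Prop :=
  exists A : pt -> Prop, forall y, K y <-> ball_hull A y.

Definition nonempty_set (K : pt -> Prop) : Prop := exists p, K p.
Definition bounded_set (K : pt -> Prop) : Prop :=
  exists M, forall p, K p -> norm p <= M.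

(* Steiner symmetral S_u(K) = { x + y u : x in P_{u^perp}(K),
   |y| <= |b(x) - a(x)|/2 }, where K ∩ (x + R u) = [x + a(x) u, x + b(x) u]. *)
Definition steiner (u : pt) (K : pt -> Prop) : pt -> Prop :=
  fun p => exists (x : pt) (y a b : R),
    p = padd x (pscale y u) /\
    dot x u = 0 /\
    (forall t, K (padd x (pscale t u)) <-> Rmin a b <= t <= Rmax a b) /\
    Rabs y <= Rabs (b - a) / 2.

(* If K = A^c, a chord of K parallel to
   u is the intersection of the chords of the disks B(c, 1), c in A, so its
   length is the least length of the chords of the lenses B(c, 1) /\ B(c', 1);
   hence S_u(K) is the intersection over c, c' in A of the Steiner symmetrals of
   these lenses, and it suffices that each of them is an intersection of unit
   disks.  The upper boundary of a lens symmetral is made of the two unit arcs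
   and of their average lowered by half the offset of the centres.  By a
   power-mean inequality this average has curvature at least one, so the unit
   circle tangent to it at any point stays above it: the disk it bounds contains
   the symmetral and excludes the points above the point of tangency.  Points
   outside one of the two arcs are excluded by the corresponding disk itself. *)

From Coquelicot Require Import Coquelicot.
From Stdlib Require Import Reals Lra Psatz Classical.
Open Scope R_scope.

(** * Unit arcs *)

(* [arc] is the upper unit semicircle and [arc_slope = - arc'] *)
Definition arc (z : R) : R := sqrt (1 - z * z).
Definition arc_slope (z : R) : R := z / arc z.
Definition arc_slope_inv (y : R) : R := y / sqrt (1 + y * y).

Lemma arc_ge0 z : 0 <= arc z.
Proof. apply sqrt_pos. Qed.

Lemma arc_pos z : -1 < z < 1 -> 0 < arc z.
Proof. intros Hz; apply sqrt_lt_R0; nra. Qed.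

Lemma arc_sqr z : -1 <= z <= 1 -> arc z * arc z = 1 - z * z.
Proof. intros Hz; apply sqrt_sqrt; nra. Qed.

Lemma arc_slope_sqr z : -1 < z < 1 -> 1 + arc_slope z * arc_slope z = / arc z * / arc z.
Proof.
intros Hz; unfold arc_slope.
assert (Hp := arc_pos z Hz); assert (Hp2 := arc_sqr z ltac:(lra)).
field_simplify; [|lra|lra].
replace (z ^ 2) with (1 - arc z ^ 2) by (simpl; nra); field; lra.
Qed.

Lemma sqrt_one_plus_sqr_pos y : 0 < sqrt (1 + y * y).
Proof. apply sqrt_lt_R0; nra. Qed.

Lemma arc_slope_invK z : -1 < z < 1 -> arc_slope_inv (arc_slope z) = z.
Proof.
intros Hz; unfold arc_slope_inv.
assert (Hp := arc_pos z Hz).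
rewrite arc_slope_sqr, sqrt_square by (auto; left; apply Rinv_0_lt_compat; lra).
unfold arc_slope; field; lra.
Qed.

Lemma arc_slopeK y : arc_slope (arc_slope_inv y) = y.
Proof.
unfold arc_slope, arc, arc_slope_inv.
assert (Hp := sqrt_one_plus_sqr_pos y).
assert (Hp2 := sqrt_sqrt (1 + y * y) ltac:(nra)).
set (p := sqrt (1 + y * y)) in *.
replace (1 - y / p * (y / p)) with (/ p * / p)
  by (field_simplify; [|lra|lra]; replace (y ^ 2) with (p ^ 2 - 1) by (simpl; nra); field; lra).
rewrite sqrt_square by (left; apply Rinv_0_lt_compat; lra).
field; lra.
Qed.

Lemma is_derive_arc z : -1 < z < 1 -> is_derive arc z (- arc_slope z).
Proof.
intros Hz; unfold arc_slope, arc.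
assert (Hp : 0 < sqrt (1 - z * z)) by (apply sqrt_lt_R0; nra).
auto_derive; replace (1 + - (z * z)) with (1 - z * z) by ring; [nra|field; lra].
Qed.

Lemma is_derive_arc_slope z : -1 < z < 1 -> is_derive arc_slope z (/ arc z ^ 3).
Proof.
intros Hz; unfold arc_slope, arc.
assert (Hp : 0 < sqrt (1 - z * z)) by (apply sqrt_lt_R0; nra).
assert (Hp2 := sqrt_sqrt (1 - z * z) ltac:(nra)).
set (p := sqrt (1 - z * z)) in *.
auto_derive; replace (1 + - (z * z)) with (1 - z * z) by ring; fold p.
- repeat split; nra.
- field_simplify; [|lra|lra].
  replace (z ^ 2) with (1 - p ^ 2) by (simpl; nra); field; lra.
Qed.

Lemma is_derive_arc_slope_inv y :
  is_derive arc_slope_inv y (/ sqrt (1 + y * y) ^ 3).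
Proof.
unfold arc_slope_inv.
assert (Hp := sqrt_one_plus_sqr_pos y).
assert (Hp2 := sqrt_sqrt (1 + y * y) ltac:(nra)).
set (p := sqrt (1 + y * y)) in *.
auto_derive; fold p.
- repeat split; nra.
- field_simplify; [|lra|lra].
  replace (y ^ 2) with (p ^ 2 - 1) by (simpl; nra); field; lra.
Qed.

Lemma is_derive_continuity_pt (f : R -> R) x l : is_derive f x l -> continuity_pt f x.
Proof.
intros H; apply is_derive_Reals in H.
apply derivable_continuous_pt; exists l; exact H.
Qed.

Lemma le_of_derive_nonneg (f df : R -> R) a b : a <= b ->
  (forall x, a < x < b -> is_derive f x (df x)) ->
  (forall x, a <= x <= b -> continuity_pt f x) ->
  (forall x, a < x < b -> 0 <= df x) -> f a <= f b.
Proof.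
intros Hab Hd Hc Hp.
(* [df] may be negative at the endpoints, where the mean value point can fall *)
destruct (MVT_gen f a b (fun x => Rmax 0 (df x))) as [c [_ Hfc]].
- rewrite Rmin_left, Rmax_right by lra.
  intros x Hx; rewrite Rmax_right by auto; auto.
- rewrite Rmin_left, Rmax_right by lra; auto.
- assert (0 <= Rmax 0 (df c)) by apply Rmax_l; nra.
Qed.

Lemma arc_slope_inv_le y1 y2 : y1 <= y2 -> arc_slope_inv y1 <= arc_slope_inv y2.
Proof.
intros H.
apply (le_of_derive_nonneg _ (fun y => / sqrt (1 + y * y) ^ 3)); auto.
- intros y _; apply is_derive_arc_slope_inv.
- intros y _; eapply is_derive_continuity_pt; apply is_derive_arc_slope_inv.
- intros y _; left; apply Rinv_0_lt_compat, pow_lt, sqrt_one_plus_sqr_pos.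
Qed.

Lemma arc_slope_inv_lt y1 y2 : y1 < y2 -> arc_slope_inv y1 < arc_slope_inv y2.
Proof.
intros H; destruct (arc_slope_inv_le y1 y2) as [|E]; [lra|auto|].
apply (f_equal arc_slope) in E; rewrite !arc_slopeK in E; lra.
Qed.

Lemma arc_slope_le z1 z2 : -1 < z1 < 1 -> -1 < z2 < 1 -> z1 <= z2 ->
  arc_slope z1 <= arc_slope z2.
Proof.
intros H1 H2 H; apply Rnot_lt_le; intros Hlt.
apply arc_slope_inv_lt in Hlt; rewrite !arc_slope_invK in Hlt by auto; lra.
Qed.

Lemma power_mean_2_3 m P Q : 0 <= m -> 0 <= P -> 0 <= Q -> 2 * m ^ 2 <= P ^ 2 + Q ^ 2 ->
  2 * m ^ 3 <= P ^ 3 + Q ^ 3.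
Proof.
intros Hm HP HQ H.
(* [(P^2 + Q^2)^3 <= 2 (P^3 + Q^3)^2], the difference factoring through [(P - Q)^2] *)
assert (HPQ : (P ^ 2 + Q ^ 2) ^ 3 <= 2 * (P ^ 3 + Q ^ 3) ^ 2).
{ assert (0 <= P ^ 4 + 2 * P ^ 3 * Q + 2 * P * Q ^ 3 + Q ^ 4).
  { assert (0 <= P ^ 3 * Q) by (apply Rmult_le_pos; [apply pow_le|]; lra).
    assert (0 <= P * Q ^ 3) by (apply Rmult_le_pos; [|apply pow_le]; lra).
    assert (0 <= P ^ 4) by (apply pow_le; lra).
    assert (0 <= Q ^ 4) by (apply pow_le; lra). lra. }
  assert (0 <= (P - Q) ^ 2 * (P ^ 4 + 2 * P ^ 3 * Q + 2 * P * Q ^ 3 + Q ^ 4))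
    by (apply Rmult_le_pos; [apply pow2_ge_0|auto]).
  nra. }
assert (Hm6 : (2 * m ^ 2) ^ 3 <= (P ^ 2 + Q ^ 2) ^ 3) by (apply pow_incr; nra).
assert (0 <= P ^ 3) by (apply pow_le; lra); assert (0 <= Q ^ 3) by (apply pow_le; lra).
apply Rnot_lt_le; intros Hlt.
assert ((P ^ 3 + Q ^ 3) * (P ^ 3 + Q ^ 3) < (2 * m ^ 3) * (2 * m ^ 3))
  by (apply Rmult_le_0_lt_compat; lra).
nra.
Qed.

Lemma is_derive_shift (f : R -> R) a c l :
  is_derive f (c - a) l -> is_derive (fun x => f (x - a)) c l.
Proof.
intros H; eapply is_derive_ext_loc; [apply filter_forall; reflexivity|].
replace l with (scal 1 l) by (unfold scal; simpl; unfold mult; simpl; ring).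
apply (is_derive_comp f (fun x => x - a)); [exact H|].
auto_derive; auto; ring.
Qed.

Lemma continuity_pt_arc z : continuity_pt arc z.
Proof.
apply (continuity_pt_comp (fun z => 1 - z * z) sqrt); [reg|].
apply continuity_pt_filterlim, continuous_sqrt.
Qed.

(** * The average of two unit arcs *)

Section MeanArc.

Variables al be : R.

Definition mean_arc (s : R) : R := (arc (s - al) + arc (s - be)) / 2.
Definition mean_slope (s : R) : R := (arc_slope (s - al) + arc_slope (s - be)) / 2.
Definition mean_slope' (s : R) : R := (/ arc (s - al) ^ 3 + / arc (s - be) ^ 3) / 2.

(* abscissa of the centre of the unit circle whose upper arc has the slope of
   [mean_arc] at [s] *)
Definition tangent_centre (s : R) : R := s - arc_slope_inv (mean_slope s).

Lemma is_derive_mean_arc s : -1 < s - al < 1 -> -1 < s - be < 1 ->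
  is_derive mean_arc s (- mean_slope s).
Proof.
intros H1 H2; unfold mean_arc, mean_slope.
apply (is_derive_ext (fun x => scal (/ 2) (plus (arc (x - al)) (arc (x - be))))).
{ intros x; unfold scal, plus; simpl; unfold mult; simpl; field. }
replace (- _) with (scal (/ 2) (plus (- arc_slope (s - al)) (- arc_slope (s - be))))
  by (unfold scal, plus; simpl; unfold mult; simpl; field).
apply is_derive_scal, (is_derive_plus (fun x => arc (x - al)) (fun x => arc (x - be)));
  apply is_derive_shift, is_derive_arc; auto.
Qed.

Lemma is_derive_mean_slope s : -1 < s - al < 1 -> -1 < s - be < 1 ->
  is_derive mean_slope s (mean_slope' s).
Proof.
intros H1 H2; unfold mean_slope, mean_slope'.
apply (is_derive_ext (fun x => scal (/ 2) (plus (arc_slope (x - al)) (arc_slope (x - be))))).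
{ intros x; unfold scal, plus; simpl; unfold mult; simpl; field. }
replace (_ / 2) with (scal (/ 2) (plus (/ arc (s - al) ^ 3) (/ arc (s - be) ^ 3)))
  by (unfold scal, plus; simpl; unfold mult; simpl; unfold Rdiv; ring).
apply is_derive_scal,
  (is_derive_plus (fun x => arc_slope (x - al)) (fun x => arc_slope (x - be)));
  apply is_derive_shift, is_derive_arc_slope; auto.
Qed.

(* [mean_slope' = - mean_arc''], so the graph of [mean_arc] has curvature at least one *)
Lemma mean_slope'_ge s : -1 < s - al < 1 -> -1 < s - be < 1 ->
  sqrt (1 + mean_slope s * mean_slope s) ^ 3 <= mean_slope' s.
Proof.
intros H1 H2; unfold mean_slope'; rewrite <- !pow_inv.
assert (HA := arc_slope_sqr _ H1); assert (HB := arc_slope_sqr _ H2).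
assert (HP := Rinv_0_lt_compat _ (arc_pos _ H1)).
assert (HQ := Rinv_0_lt_compat _ (arc_pos _ H2)).
unfold mean_slope in *.
set (A := arc_slope (s - al)) in *; set (B := arc_slope (s - be)) in *.
set (m2 := 1 + (A + B) / 2 * ((A + B) / 2)).
assert (Hm2 : 0 <= m2) by (unfold m2; generalize (Rle_0_sqr ((A + B) / 2)); unfold Rsqr; lra).
assert (Hm := sqrt_sqrt m2 Hm2).
cut (2 * sqrt m2 ^ 3 <= (/ arc (s - al)) ^ 3 + (/ arc (s - be)) ^ 3); [lra|].
apply power_mean_2_3; [apply sqrt_pos|lra|lra|].
replace (sqrt m2 ^ 2) with m2 by (simpl; lra).
assert (0 <= (A - B) * (A - B)) by apply Rle_0_sqr.
simpl; unfold m2; lra.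
Qed.

Lemma is_derive_tangent_centre s : -1 < s - al < 1 -> -1 < s - be < 1 ->
  is_derive tangent_centre s
    (1 - mean_slope' s / sqrt (1 + mean_slope s * mean_slope s) ^ 3).
Proof.
intros H1 H2; unfold tangent_centre.
apply (is_derive_ext (fun x => minus x (arc_slope_inv (mean_slope x)))).
{ intros x; unfold minus, plus, opp; simpl; ring. }
replace (1 - _) with
  (minus one (scal (mean_slope' s) (/ sqrt (1 + mean_slope s * mean_slope s) ^ 3)))
  by (unfold minus, plus, opp, scal, one; simpl; unfold mult; simpl; unfold Rdiv; ring).
apply (is_derive_minus (fun x => x) (fun x => arc_slope_inv (mean_slope x))).
- auto_derive; auto.
- apply (is_derive_comp arc_slope_inv mean_slope).
  + apply is_derive_arc_slope_inv.
  + apply is_derive_mean_slope; auto.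
Qed.

Lemma tangent_centre_antitone s1 s2 :
  -1 < s1 - al < 1 -> -1 < s1 - be < 1 -> -1 < s2 - al < 1 -> -1 < s2 - be < 1 ->
  s1 <= s2 -> tangent_centre s2 <= tangent_centre s1.
Proof.
intros H1 H2 H3 H4 H.
cut (- tangent_centre s1 <= - tangent_centre s2); [lra|].
apply (le_of_derive_nonneg (fun s => - tangent_centre s)
  (fun s => - (1 - mean_slope' s / sqrt (1 + mean_slope s * mean_slope s) ^ 3))); auto.
- intros s Hs; apply (is_derive_opp tangent_centre), is_derive_tangent_centre; lra.
- intros s Hs; apply (continuity_pt_opp tangent_centre).
  eapply is_derive_continuity_pt, is_derive_tangent_centre; lra.
- intros s Hs.
  assert (Hm := mean_slope'_ge s ltac:(lra) ltac:(lra)).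
  assert (0 < sqrt (1 + mean_slope s * mean_slope s) ^ 3)
    by apply pow_lt, sqrt_one_plus_sqr_pos.
  cut (1 <= mean_slope' s / sqrt (1 + mean_slope s * mean_slope s) ^ 3); [lra|].
  apply Rmult_le_reg_r with (sqrt (1 + mean_slope s * mean_slope s) ^ 3); auto.
  unfold Rdiv; rewrite Rmult_assoc, Rinv_l; lra.
Qed.

Lemma tangent_point_between s : -1 < s - al < 1 -> -1 < s - be < 1 ->
  (s - al <= s - tangent_centre s <= s - be) \/ (s - be <= s - tangent_centre s <= s - al).
Proof.
intros H1 H2.
replace (s - tangent_centre s) with (arc_slope_inv (mean_slope s))
  by (unfold tangent_centre; ring).
unfold mean_slope.
assert (Hal := arc_slope_invK (s - al) H1); assert (Hbe := arc_slope_invK (s - be) H2).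
destruct (Rle_or_lt (s - al) (s - be)) as [h|h]; [left|right].
- assert (arc_slope (s - al) <= arc_slope (s - be)) by (apply arc_slope_le; auto).
  rewrite <- Hal at 1; rewrite <- Hbe at 3; split; apply arc_slope_inv_le; lra.
- assert (arc_slope (s - be) <= arc_slope (s - al)) by (apply arc_slope_le; auto; lra).
  rewrite <- Hbe at 1; rewrite <- Hal at 3; split; apply arc_slope_inv_le; lra.
Qed.

Lemma arc_slope_le_mean_slope s0 s :
  -1 < s0 - al < 1 -> -1 < s0 - be < 1 -> -1 < s - al < 1 -> -1 < s - be < 1 ->
  s0 <= s -> arc_slope (s - tangent_centre s0) <= mean_slope s.
Proof.
intros H1 H2 H3 H4 H.
assert (Hc := tangent_centre_antitone s0 s H1 H2 H3 H4 H).
assert (B0 := tangent_point_between s0 H1 H2).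
assert (B := tangent_point_between s H3 H4).
rewrite <- (arc_slopeK (mean_slope s)).
replace (arc_slope_inv (mean_slope s)) with (s - tangent_centre s)
  by (unfold tangent_centre; ring).
apply arc_slope_le; lra.
Qed.

Lemma mean_slope_le_arc_slope s0 s :
  -1 < s0 - al < 1 -> -1 < s0 - be < 1 -> -1 < s - al < 1 -> -1 < s - be < 1 ->
  s <= s0 -> mean_slope s <= arc_slope (s - tangent_centre s0).
Proof.
intros H1 H2 H3 H4 H.
assert (Hc := tangent_centre_antitone s s0 H3 H4 H1 H2 H).
assert (B0 := tangent_point_between s0 H1 H2).
assert (B := tangent_point_between s H3 H4).
rewrite <- (arc_slopeK (mean_slope s)).
replace (arc_slope_inv (mean_slope s)) with (s - tangent_centre s)
  by (unfold tangent_centre; ring).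
apply arc_slope_le; lra.
Qed.

Lemma continuity_pt_arc_shift a x : continuity_pt (fun t => arc (t - a)) x.
Proof.
apply (continuity_pt_comp (fun t => t - a) arc); [reg|apply continuity_pt_arc].
Qed.

Lemma is_derive_arc_sub_mean_arc sg s :
  -1 < s - al < 1 -> -1 < s - be < 1 -> -1 < s - sg < 1 ->
  is_derive (fun x => arc (x - sg) - mean_arc x) s (mean_slope s - arc_slope (s - sg)).
Proof.
intros H1 H2 H3.
apply (is_derive_ext (fun x => minus (arc (x - sg)) (mean_arc x))); [reflexivity|].
replace (_ - _) with (minus (- arc_slope (s - sg)) (- mean_slope s))
  by (unfold minus, plus, opp; simpl; ring).
apply (is_derive_minus (fun x => arc (x - sg)) mean_arc).
- apply is_derive_shift, is_derive_arc; auto.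
- apply is_derive_mean_arc; auto.
Qed.

Lemma continuity_pt_arc_sub_mean_arc sg s :
  continuity_pt (fun x => arc (x - sg) - mean_arc x) s.
Proof.
apply continuity_pt_minus; [apply continuity_pt_arc_shift|].
apply (continuity_pt_mult (fun x => arc (x - al) + arc (x - be)) (fun _ => / 2)).
- apply continuity_pt_plus; apply continuity_pt_arc_shift.
- apply continuity_pt_const; intros ? ?; reflexivity.
Qed.

Lemma mean_arc_below_tangent_arc s0 s :
  -1 < s0 - al < 1 -> -1 < s0 - be < 1 -> -1 <= s - al <= 1 -> -1 <= s - be <= 1 ->
  mean_arc s - mean_arc s0 <= arc (s - tangent_centre s0) - arc (s0 - tangent_centre s0).
Proof.
intros H1 H2 H3 H4.
assert (B0 := tangent_point_between s0 H1 H2).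
set (sg := tangent_centre s0) in *.
set (gap := fun x => arc (x - sg) - mean_arc x).
assert (Hgap : gap s0 <= gap s); [|unfold gap in Hgap; lra].
assert (Hd : forall x, Rmin s0 s < x < Rmax s0 s ->
  is_derive gap x (mean_slope x - arc_slope (x - sg))).
{ intros x Hx.
  assert (Hx' : -1 < x - al < 1 /\ -1 < x - be < 1)
    by (unfold Rmin, Rmax in Hx; destruct Rle_dec in Hx; lra).
  assert (B := tangent_point_between x (proj1 Hx') (proj2 Hx')).
  apply is_derive_arc_sub_mean_arc; try apply Hx'.
  destruct (Rle_or_lt s0 x).
  - assert (tangent_centre x <= sg) by (apply tangent_centre_antitone; lra); lra.
  - assert (sg <= tangent_centre x) by (apply tangent_centre_antitone; lra); lra. }
destruct (Rle_or_lt s0 s) as [h|h].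
- rewrite Rmin_left, Rmax_right in Hd by lra.
  apply (le_of_derive_nonneg gap (fun x => mean_slope x - arc_slope (x - sg))); auto.
  + intros x _; apply continuity_pt_arc_sub_mean_arc.
  + intros x Hx.
    assert (arc_slope (x - sg) <= mean_slope x) by (apply arc_slope_le_mean_slope; lra).
    lra.
- rewrite Rmin_right, Rmax_left in Hd by lra.
  assert (Hgap : - gap s <= - gap s0); [|lra].
  apply (le_of_derive_nonneg (fun x => - gap x)
    (fun x => - (mean_slope x - arc_slope (x - sg)))); try lra.
  + intros x Hx; apply (is_derive_opp gap); auto.
  + intros x _; apply (continuity_pt_opp gap), continuity_pt_arc_sub_mean_arc.
  + intros x Hx.
    assert (mean_slope x <= arc_slope (x - sg)) by (apply mean_slope_le_arc_slope; lra).
    lra.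
Qed.

End MeanArc.

(** * Symmetrals of lenses *)

Lemma Rabs_bounds y : - Rabs y <= y <= Rabs y.
Proof. split; [rewrite <- (Rabs_Ropp y); pose proof (Rle_abs (- y)) | apply Rle_abs]; lra. Qed.

Lemma unit_disk_iff_arc x w : x * x + w * w <= 1 <-> -1 <= x <= 1 /\ Rabs w <= arc x.
Proof.
split.
- intros H.
  assert (Hx : -1 <= x <= 1) by (split; apply Rnot_lt_le; intros; nra).
  split; [exact Hx|].
  rewrite <- sqrt_Rsqr_abs; unfold arc, Rsqr; apply sqrt_le_1_alt; lra.
- intros [Hx Hw].
  assert (Hw2 : Rabs w * Rabs w <= arc x * arc x)
    by (apply Rmult_le_compat; auto using Rabs_pos).
  rewrite arc_sqr in Hw2 by auto; rewrite <- Rabs_mult, Rabs_pos_eq in Hw2 by nra; lra.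
Qed.

Lemma out_unit_disk_of_arc x w : arc x < Rabs w -> 1 < x * x + w * w.
Proof. intros H; apply Rnot_le_lt; rewrite unit_disk_iff_arc; lra. Qed.

Lemma in_unit_disk_of_shifted_arc x y k : -1 <= x <= 1 -> k <= 0 ->
  Rabs y <= arc x + k -> x * x + (y - k) * (y - k) <= 1 /\ x * x + (y + k) * (y + k) <= 1.
Proof.
intros Hx Hk Hy; pose proof (Rabs_bounds y).
split; apply unit_disk_iff_arc; split; auto; apply Rabs_le; lra.
Qed.

Lemma arc_shift_le e x d : (e = 1 \/ e = -1) -> -1 <= x <= 1 -> -1 <= x + d <= 1 ->
  -1 <= e + d <= 1 -> arc (x + d) <= arc (e + d) + arc x.
Proof.
intros He Hx Hxd Hed.
assert (E1 := arc_sqr _ Hx); assert (E2 := arc_sqr _ Hxd); assert (E3 := arc_sqr _ Hed).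
assert (0 <= arc (e + d) * arc x) by (apply Rmult_le_pos; apply arc_ge0).
assert (d * (e - x) <= 0) by (destruct He as [->| ->]; nra).
apply Rsqr_incr_0_var; [|apply Rplus_le_le_0_compat; apply arc_ge0].
unfold Rsqr; destruct He as [->| ->]; nra.
Qed.

Lemma arc_between a b z : a <= z <= b -> Rmin (arc a) (arc b) <= arc z.
Proof.
intros Hz; unfold arc.
destruct (Rle_or_lt 0 z).
- apply Rle_trans with (sqrt (1 - b * b)); [apply Rmin_r|apply sqrt_le_1_alt; nra].
- apply Rle_trans with (sqrt (1 - a * a)); [apply Rmin_l|apply sqrt_le_1_alt; nra].
Qed.

Lemma mean_arc_comm al be s : mean_arc al be s = mean_arc be al s.
Proof. unfold mean_arc; lra. Qed.

(* Steiner symmetral, in the coordinates across and along the direction, of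
   the lens of the unit disks centred [(al, t)] and [(be, t')], [ep = |t - t'| / 2] *)
Definition lens_symmetral (al be ep s y : R) : Prop :=
  -1 <= s - al <= 1 /\ -1 <= s - be <= 1 /\
  Rabs y <= arc (s - al) /\ Rabs y <= arc (s - be) /\ Rabs y <= mean_arc al be s - ep.

Lemma lens_symmetral_comm al be ep s y :
  lens_symmetral al be ep s y -> lens_symmetral be al ep s y.
Proof. unfold lens_symmetral; rewrite mean_arc_comm; tauto. Qed.

Definition disk_separates (W : R -> R -> Prop) (s0 t0 : R) : Prop :=
  exists sg k, (forall s y, W s y -> (s - sg) * (s - sg) + (y - k) * (y - k) <= 1) /\
    1 < (s0 - sg) * (s0 - sg) + (t0 - k) * (t0 - k).

Lemma disk_separates_sub (W W' : R -> R -> Prop) s0 t0 :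
  (forall s y, W s y -> W' s y) -> disk_separates W' s0 t0 -> disk_separates W s0 t0.
Proof. intros HW [sg [k [Hin Hout]]]; exists sg, k; split; auto. Qed.

Lemma lens_symmetral_sep_outside al be ep s0 t0 :
  1 < (s0 - al) * (s0 - al) + t0 * t0 -> disk_separates (lens_symmetral al be ep) s0 t0.
Proof.
intros Hout; exists al, 0; split; [|rewrite Rminus_0_r; auto].
intros s y [Hs [_ [Hy _]]]; rewrite Rminus_0_r; apply unit_disk_iff_arc; auto.
Qed.

Lemma lens_symmetral_sep_tangent al be ep s0 t0 :
  -1 < s0 - al < 1 -> -1 < s0 - be < 1 ->
  Rabs t0 <= arc (s0 - al) -> Rabs t0 <= arc (s0 - be) ->
  mean_arc al be s0 - ep < Rabs t0 -> disk_separates (lens_symmetral al be ep) s0 t0.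
Proof.
intros H1 H2 Ha Hb Ht.
assert (B := tangent_point_between al be s0 H1 H2).
set (sg := tangent_centre al be s0) in *.
(* the disk under the unit arc tangent to [mean_arc - ep] at [s0], reflected if [t0 < 0] *)
set (k := mean_arc al be s0 - ep - arc (s0 - sg)).
assert (Hk : k < 0).
{ assert (Rmin (arc (s0 - al)) (arc (s0 - be)) <= arc (s0 - sg))
    by (destruct B; [|rewrite Rmin_comm]; apply arc_between; auto).
  assert (Rabs t0 <= Rmin (arc (s0 - al)) (arc (s0 - be))) by (apply Rmin_glb; auto).
  unfold k; lra. }
assert (Hin : forall s y, lens_symmetral al be ep s y ->
  -1 <= s - sg <= 1 /\ Rabs y <= arc (s - sg) + k).
{ intros s y (Hsa & Hsb & _ & _ & Hy); split; [destruct B; lra|].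
  assert (T := mean_arc_below_tangent_arc al be s0 s H1 H2 Hsa Hsb); fold sg in T.
  unfold k; lra. }
assert (Ht0 := Rabs_bounds t0).
destruct (Rle_or_lt 0 t0) as [h|h]; [exists sg, k|exists sg, (- k)]; split.
- intros s y Hw; destruct (Hin s y Hw) as [Hs Hy].
  apply (in_unit_disk_of_shifted_arc _ _ k Hs); lra.
- apply out_unit_disk_of_arc; pose proof (Rle_abs (t0 - k)).
  rewrite Rabs_pos_eq in Ht by lra; unfold k in *; lra.
- intros s y Hw; destruct (Hin s y Hw) as [Hs Hy].
  replace (y - - k) with (y + k) by ring.
  apply (in_unit_disk_of_shifted_arc _ _ k Hs); lra.
- apply out_unit_disk_of_arc; rewrite <- Rabs_Ropp; pose proof (Rle_abs (- (t0 - - k))).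
  rewrite Rabs_left in Ht by lra; unfold k in *; lra.
Qed.

Lemma lens_symmetral_sep_end al be ep s0 t0 :
  (s0 - al = 1 \/ s0 - al = -1) -> -1 <= s0 - be <= 1 -> Rabs t0 <= arc (s0 - al) ->
  mean_arc al be s0 - ep < Rabs t0 -> disk_separates (lens_symmetral al be ep) s0 t0.
Proof.
intros Hend Hb Ha Ht.
assert (A0 : arc (s0 - al) = 0)
  by (unfold arc; destruct Hend as [-> | ->]; rewrite <- sqrt_0; f_equal; ring).
assert (T0 : t0 = 0) by (pose proof (Rabs_pos t0); pose proof (Rabs_bounds t0); lra).
unfold mean_arc in Ht; rewrite A0, T0, Rabs_R0 in Ht.
set (k := arc (s0 - be) / 2 - ep).
exists al, k; split.
- intros s y (Hsa & Hsb & _ & _ & Hy); unfold mean_arc in Hy.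
  assert (arc (s - be) <= arc (s0 - be) + arc (s - al)).
  { replace (s - be) with ((s - al) + (al - be)) by ring.
    replace (s0 - be) with ((s0 - al) + (al - be)) by ring.
    apply arc_shift_le; auto; lra. }
  apply (in_unit_disk_of_shifted_arc _ _ k Hsa); unfold k; lra.
- rewrite T0; destruct Hend as [-> | ->]; unfold k; nra.
Qed.

Lemma unit_interval_cases x : -1 <= x <= 1 -> (x = 1 \/ x = -1) \/ -1 < x < 1.
Proof. intros; lra. Qed.

Lemma lens_symmetral_separation al be ep s0 t0 :
  ~ lens_symmetral al be ep s0 t0 -> disk_separates (lens_symmetral al be ep) s0 t0.
Proof.
intros HW.
destruct (Rlt_or_le 1 ((s0 - al) * (s0 - al) + t0 * t0)) as [Oa|Ia];
  [apply lens_symmetral_sep_outside; auto|].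
destruct (Rlt_or_le 1 ((s0 - be) * (s0 - be) + t0 * t0)) as [Ob|Ib].
{ apply (disk_separates_sub _ _ _ _ (lens_symmetral_comm al be ep)).
  apply lens_symmetral_sep_outside; auto. }
apply unit_disk_iff_arc in Ia as [Sa Ta]; apply unit_disk_iff_arc in Ib as [Sb Tb].
assert (Hm : mean_arc al be s0 - ep < Rabs t0)
  by (apply Rnot_le_lt; intros Hm; apply HW; repeat split; auto; tauto).
destruct (unit_interval_cases _ Sa) as [Ea|Ia];
  [apply lens_symmetral_sep_end; auto|].
destruct (unit_interval_cases _ Sb) as [Eb|Ib].
{ apply (disk_separates_sub _ _ _ _ (lens_symmetral_comm al be ep)).
  apply lens_symmetral_sep_end; auto; rewrite mean_arc_comm; auto. }
apply lens_symmetral_sep_tangent; auto.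
Qed.

(** * Coordinates across and along a direction *)

Definition perp (u : pt) : pt := (- snd u, fst u).
Definition across (u p : pt) : R := dot p (perp u).
Definition along (u p : pt) : R := dot p u.
Definition of_coords (u : pt) (s t : R) : pt := padd (pscale s (perp u)) (pscale t u).

Lemma dot_self_of_norm u : norm u = 1 -> dot u u = 1.
Proof.
intros H; unfold norm in H.
rewrite <- (sqrt_sqrt (dot u u)), H by (destruct u; unfold dot; simpl; nra); ring.
Qed.

Lemma across_line u x t : across u (padd x (pscale t u)) = across u x.
Proof. destruct u, x; unfold across, perp, dot, padd, pscale; simpl; ring. Qed.

Section Coordinates.

Variable u : pt.
Hypothesis unit_u : dot u u = 1.

Lemma across_of_coords s t : across u (of_coords u s t) = s.
Proof.
destruct u as [u1 u2]; unfold across, of_coords, perp, dot, padd, pscale in *; simpl in *.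
transitivity (s * (u1 * u1 + u2 * u2)); [ring|rewrite unit_u; ring].
Qed.

Lemma along_of_coords s t : along u (of_coords u s t) = t.
Proof.
destruct u as [u1 u2]; unfold along, of_coords, perp, dot, padd, pscale in *; simpl in *.
transitivity (t * (u1 * u1 + u2 * u2)); [ring|rewrite unit_u; ring].
Qed.

Lemma along_line x t : along u (padd x (pscale t u)) = along u x + t.
Proof.
rewrite <- (Rmult_1_r t) at 2; rewrite <- unit_u.
destruct u, x; unfold along, dot, padd, pscale; simpl; ring.
Qed.

Lemma dist_le_1_iff x y : dist x y <= 1 <->
  (across u y - across u x) * (across u y - across u x) +
  (along u y - along u x) * (along u y - along u x) <= 1.
Proof.
destruct u as [u1 u2], x as [x1 x2], y as [y1 y2].
unfold dist, norm, across, along, perp, dot, padd, pscale in *; simpl in *.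
set (d := (x1 + -1 * y1) * (x1 + -1 * y1) + (x2 + -1 * y2) * (x2 + -1 * y2)).
match goal with |- _ <-> ?E <= 1 => replace E with (d * (u1 * u1 + u2 * u2)) by (unfold d; ring) end.
rewrite unit_u, Rmult_1_r.
assert (0 <= d) by (apply Rplus_le_le_0_compat; apply Rle_0_sqr).
split; intros Hd.
- rewrite <- sqrt_1 in Hd; apply sqrt_le_0 in Hd; lra.
- rewrite <- sqrt_1; apply sqrt_le_1_alt, Hd.
Qed.

Lemma unit_ball_coords c p : unit_ball c p <->
  -1 <= across u p - across u c <= 1 /\
  Rabs (along u p - along u c) <= arc (across u p - across u c).
Proof. unfold unit_ball; rewrite dist_le_1_iff; apply unit_disk_iff_arc. Qed.

End Coordinates.

(** * Steiner symmetrals of ball hulls *)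

Lemma intersection_of_intervals {I : Type} (A : I -> Prop) (l h : I -> R) d :
  (exists c, A c) -> (forall c c', A c -> A c' -> l c + d <= h c') ->
  exists lo hi, lo + d <= hi /\
    forall t, lo <= t <= hi <-> (forall c, A c -> l c <= t <= h c).
Proof.
intros [c0 Hc0] Hlh.
destruct (completeness (fun r => exists c, A c /\ r = l c)) as [lo [Hlo1 Hlo2]].
{ exists (h c0 - d); intros r [c [Hc ->]]; specialize (Hlh c c0 Hc Hc0); lra. }
{ exists (l c0), c0; auto. }
destruct (completeness (fun r => exists c, A c /\ r = - h c)) as [mhi [Hhi1 Hhi2]].
{ exists (- (l c0 + d)); intros r [c [Hc ->]]; specialize (Hlh c0 c Hc0 Hc); lra. }
{ exists (- h c0), c0; auto. }
assert (Lo : forall c, A c -> l c <= lo) by (intros c Hc; apply Hlo1; eauto).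
assert (Hi : forall c, A c -> - mhi <= h c)
  by (intros c Hc; enough (- h c <= mhi) by lra; apply Hhi1; eauto).
assert (LoGlb : forall t, (forall c, A c -> l c <= t) -> lo <= t)
  by (intros t Ht; apply Hlo2; intros r [c [Hc ->]]; auto).
assert (HiLub : forall t, (forall c, A c -> t <= h c) -> t <= - mhi).
{ intros t Ht; enough (mhi <= - t) by lra.
  apply Hhi2; intros r [c [Hc ->]]; specialize (Ht c Hc); lra. }
exists lo, (- mhi); split.
- apply HiLub; intros c' Hc'; enough (lo <= h c' - d) by lra.
  apply LoGlb; intros c Hc; specialize (Hlh c c' Hc Hc'); lra.
- intros t; split.
  + intros Ht c Hc; specialize (Lo c Hc); specialize (Hi c Hc); lra.
  + intros Ht; split; [apply LoGlb|apply HiLub]; intros c Hc; apply Ht, Hc.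
Qed.

Lemma Rabs_sub_Rmax_Rmin a b : Rabs (b - a) = Rmax a b - Rmin a b.
Proof.
unfold Rmax, Rmin; destruct (Rle_dec a b);
  [rewrite Rabs_pos_eq | rewrite Rabs_left]; lra.
Qed.

Lemma in_S2_of_separation (S : pt -> Prop) :
  (forall p, ~ S p -> exists c, (forall z, S z -> unit_ball c z) /\ ~ unit_ball c p) ->
  in_S2 S.
Proof.
intros Hsep; exists (fun c => forall z, S z -> unit_ball c z); intros y; split.
- intros Hy c Hc; apply Hc, Hy.
- intros Hy; apply NNPP; intros Hny.
  destruct (Hsep y Hny) as [c [Hc Hnc]]; apply Hnc, Hy, Hc.
Qed.

Section SteinerBallHull.

Variables (A : pt -> Prop) (u : pt).
Hypothesis unit_u : dot u u = 1.

Let lens_of (c c' q : pt) : Prop :=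
  lens_symmetral (across u c) (across u c') (Rabs (along u c - along u c') / 2)
    (across u q) (along u q).

Lemma steiner_ball_hull_lens q c c' :
  steiner u (ball_hull A) q -> A c -> A c' -> lens_of c c' q.
Proof.
intros (x & y & a & b & -> & Hx & Hline & Hy) Hc Hc'.
change (along u x = 0) in Hx.
unfold lens_of, lens_symmetral, mean_arc.
rewrite across_line, along_line, Hx, Rplus_0_l by auto.
rewrite Rabs_sub_Rmax_Rmin in Hy.
assert (Hab := Rmin_Rmax a b).
set (lo := Rmin a b) in *; set (hi := Rmax a b) in *.
assert (Lo := proj2 (Hline lo) ltac:(lra)); assert (Hi := proj2 (Hline hi) ltac:(lra)).
destruct (proj1 (unit_ball_coords u unit_u c _) (Lo c Hc)) as [S1 T1].
destruct (proj1 (unit_ball_coords u unit_u c' _) (Lo c' Hc')) as [S2 T2].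
destruct (proj1 (unit_ball_coords u unit_u c _) (Hi c Hc)) as [_ T3].
destruct (proj1 (unit_ball_coords u unit_u c' _) (Hi c' Hc')) as [_ T4].
rewrite !across_line in S1, S2, T1, T2, T3, T4.
rewrite !along_line, Hx, !Rplus_0_l in T1, T2, T3, T4 by auto.
pose proof (Rabs_bounds (lo - along u c)); pose proof (Rabs_bounds (lo - along u c')).
pose proof (Rabs_bounds (hi - along u c)); pose proof (Rabs_bounds (hi - along u c')).
assert (Rabs (along u c - along u c') <=
  arc (across u x - across u c) + arc (across u x - across u c') - (hi - lo))
  by (apply Rabs_le; lra).
repeat split; lra.
Qed.

Lemma steiner_ball_hull_of_lens q : (exists c, A c) ->
  (forall c c', A c -> A c' -> lens_of c c' q) -> steiner u (ball_hull A) q.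
Proof.
intros Hne Hlens.
set (s := across u q); set (y := along u q).
destruct (intersection_of_intervals A
  (fun c => along u c - arc (s - across u c)) (fun c => along u c + arc (s - across u c))
  (2 * Rabs y) Hne) as (lo & hi & Hgap & Hint).
{ intros c c' Hc Hc'; destruct (Hlens c c' Hc Hc') as (_ & _ & _ & _ & Hm).
  unfold mean_arc in Hm; pose proof (Rle_abs (along u c - along u c')); fold s y in Hm; lra. }
pose proof (Rabs_pos y).
set (x := padd q (pscale (- y) u)).
assert (Ex : q = padd x (pscale y u))
  by (unfold x; destruct q, u; unfold padd, pscale; simpl; f_equal; ring).
assert (Sx : across u x = s) by (unfold x; rewrite across_line; auto).
assert (Tx : along u x = 0) by (unfold x; rewrite along_line by auto; unfold y; ring).
exists x, y, lo, hi; split; [|split; [exact Tx|split]].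
- exact Ex.
- intros t; rewrite Rmin_left, Rmax_right, Hint by lra; split.
  + intros Hp c Hc; destruct (proj1 (unit_ball_coords u unit_u c _) (Hp c Hc)) as [_ Ht].
    rewrite across_line, along_line, Sx, Tx, Rplus_0_l in Ht by auto.
    pose proof (Rabs_bounds (t - along u c)); lra.
  + intros Ht c Hc; apply (unit_ball_coords u unit_u).
    rewrite across_line, along_line, Sx, Tx, Rplus_0_l by auto.
    destruct (Hlens c c Hc Hc) as (Hs & _); split; [exact Hs|].
    apply Rabs_le; specialize (Ht c Hc); lra.
- rewrite (Rabs_pos_eq (hi - lo)) by lra; lra.
Qed.

Lemma steiner_ball_hull_in_S2 : (exists c, A c) -> in_S2 (steiner u (ball_hull A)).
Proof.
intros Hne; apply in_S2_of_separation; intros p Hp.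
assert (exists c c', A c /\ A c' /\ ~ lens_of c c' p) as (c & c' & Hc & Hc' & Hnl).
{ apply NNPP; intros Hno; apply Hp, steiner_ball_hull_of_lens; auto.
  intros c c' Hc Hc'; apply NNPP; intros Hnl; apply Hno; eauto 6. }
destruct (lens_symmetral_separation _ _ _ _ _ Hnl) as (sg & k & Hin & Hout).
exists (of_coords u sg k); split.
- intros z Hz; unfold unit_ball; rewrite (dist_le_1_iff u), across_of_coords, along_of_coords by auto.
  apply Hin, steiner_ball_hull_lens; auto.
- unfold unit_ball; rewrite (dist_le_1_iff u), across_of_coords, along_of_coords by auto; lra.
Qed.

End SteinerBallHull.

Lemma steiner_ext u (K K' : pt -> Prop) p :
  (forall y, K y <-> K' y) -> steiner u K p -> steiner u K' p.
Proof.
intros HK (x & y & a & b & E & Hx & Hl & Hy).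
exists x, y, a, b; split; [|split; [|split]]; auto.
intros t; rewrite <- HK; apply Hl.
Qed.

Lemma in_S2_ext (S S' : pt -> Prop) : in_S2 S -> (forall p, S p <-> S' p) -> in_S2 S'.
Proof. intros [A HA] HS; exists A; intros y; rewrite <- HS; apply HA. Qed.

Lemma bounded_ball_hull_nonempty A : bounded_set (ball_hull A) -> exists c, A c.
Proof.
intros [M HM]; apply NNPP; intros Hno.
assert (Hfar := HM (Rabs M + 1, 0) ltac:(intros c Hc; exfalso; eauto)).
unfold norm, dot in Hfar; simpl in Hfar.
replace ((Rabs M + 1) * (Rabs M + 1) + 0 * 0) with (Rsqr (Rabs M + 1)) in Hfar
  by (unfold Rsqr; ring).
rewrite sqrt_Rsqr in Hfar by (pose proof (Rabs_pos M); lra).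
pose proof (Rle_abs M); lra.
Qed.

Theorem theorem4p1 (K : pt -> Prop) (u : pt) :
  in_S2 K -> nonempty_set K -> bounded_set K -> norm u = 1 ->
  in_S2 (steiner u K).
Proof.
intros [A HA] _ [M HM] Hn.
assert (Hne : exists c, A c).
{ apply bounded_ball_hull_nonempty; exists M; intros p Hp; apply HM, HA, Hp. }
apply (in_S2_ext (steiner u (ball_hull A))).
- apply steiner_ball_hull_in_S2; auto using dot_self_of_norm.
- intros p; split; apply steiner_ext; firstorder.
Qed.
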